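(* Define a sequence of permutations $(a_i)_{i\ge 1}$ as follows. Let $$a_1 = 13\;12\;10\;14\;8\;11\;6\;9\;4\;7\;3\;2\;1\;5,$$ a permutation of $\{1,\dots,14\}$ in one-line notation. Given $a_i$, a permutation of $\{1,\dots,n\}$ whose maximum entry is $m=n$, obtain $a_{i+1}$ by: increasing by $2$ every entry of $a_i$ that is weakly to the left of the position of $m$ (including $m$ itself), leaving all entries to the right of $m$ unchanged, and inserting immediately after the (now incremented) maximum entry two new consecutive entries with values $m-4$ and $m-1$, in this order. (For example, $a_2 = 15\;14\;12\;16\;10\;13\;8\;11\;6\;9\;4\;7\;3\;2\;1\;5$.) Then each $a_i$ is a permutation of $\{1,\dots,2i+12\}$, and for all $i\neq j$ the permutations $a_i$ and $a_j$ are incomparable in the pattern-containment order. Consequently, the partially ordered set of all finite permutations ordered by pattern containment contains an infinite antichain, namely $\{a_i : i\ge 1\}$.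
   Context: A permutation of $\{1,\dots,n\}$ is written in one-line notation as the sequence $p(1)\,p(2)\cdots p(n)$. For a permutation $p_1$ of $\{1,\dots,m\}$ and a permutation $p_2$ of $\{1,\dots,n\}$ with $m\le n$, we say $p_1 \le p_2$ ($p_1$ is contained in $p_2$) if one can delete $n-m$ entries from the sequence $p_2$ so that, after renaming the remaining $m$ entries by their relative rank (the smallest becomes $1$, the next $2$, etc.), one obtains exactly $p_1$; equivalently, there are positions $k_1<\dots<k_m$ with $p_2(k_s)<p_2(k_t)$ if and only if $p_1(s)<p_1(t)$. This makes the set of all finite permutations a partially ordered set. An antichain is a set of pairwise incomparable elements. *)

From mathcomp Require Import all_boot.
Set Implicit Arguments. Unset Strict Implicit. Unset Printing Implicit Defensive.

(* Permutations are represented in one-line notation as sequences of nats. *)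

Definition perm_contained (p q : seq nat) : Prop :=
  exists msk : bitseq,
    size msk = size q /\
    let s := mask msk q in
    size s = size p /\
    forall x y, x < size p -> y < size p ->
      (nth 0 s x < nth 0 s y) = (nth 0 p x < nth 0 p y).

Definition incomparable (p q : seq nat) : Prop :=
  ~ perm_contained p q /\ ~ perm_contained q p.

Definition a1 : seq nat := [:: 13; 12; 10; 14; 8; 11; 6; 9; 4; 7; 3; 2; 1; 5].

Definition step (s : seq nat) : seq nat :=
  let m := foldr maxn 0 s in
  let k := index m s in
  map (addn 2) (take k.+1 s) ++ [:: m - 4; m - 1] ++ drop k.+1 s.

(* a i for i >= 1; a 1 = a1, a (i+1) = step (a i). *)
Definition a (i : nat) : seq nat := iter i.-1 step a1.

From mathcomp Require Import all_boot zify.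

Set Implicit Arguments.
Unset Strict Implicit.
Unset Printing Implicit Defensive.

(* Each a_i is the oscillation osc n of size n = 2i + 12 below: the head
   n-1, n-2, n-4, n, then the zigzag n-6, n-3, n-8, n-5, ..., then the tail
   3, 2, 1, 5.  Its maximum n and its last entry 5 are the only entries with
   three smaller entries to their left, so an occurrence of osc N in osc M
   sends these two anchors to the anchors of osc M.  In osc N the anchors are
   joined by a path of N - 6 increasing pairs running through the zigzag; its
   image is a path of increasing pairs of osc M between the anchors of osc M,
   and such a path has length at least M - 6 because the potential [level]
   changes by at most one along an increasing pair.  Hence M <= N. *)

Lemma mkseqD (T : Type) (f : nat -> T) m k :
  mkseq f (m + k) = mkseq f m ++ mkseq (fun i => f (m + i)) k.
Proof.
by rewrite /mkseq iotaD map_cat add0n -{2}(addn0 m) iotaDl -map_comp.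
Qed.

Lemma foldr_maxn_le (s : seq nat) m : all (leq^~ m) s -> foldr maxn 0 s <= m.
Proof. by elim: s => //= x s IH /andP [x_le /IH]; rewrite geq_max x_le. Qed.

(* Positions are 0-based; the values at positions p >= n are junk. *)
Definition osc (n p : nat) : nat :=
  if p < 4 then nth 0 [:: n - 1; n - 2; n - 4; n] p
  else if p < n - 4 then (if odd p then n + 2 - p else n - 2 - p)
  else nth 0 [:: 3; 2; 1; 5] (p - (n - 4)).

(* Roughly the distance from position 3 to p among increasing pairs of osc n. *)
Definition level (n p : nat) : nat :=
  if p < 4 then nth 0 [:: 0; 0; 2; 1] p
  else if p < n - 4 then (if odd p then p - 2 else p)
  else if p == n - 1 then n - 5 else n - 4.

Variant osc_spec (n p : nat) : nat -> nat -> Prop :=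
  | OscHead0 of p = 0 : osc_spec n p (n - 1) 0
  | OscHead1 of p = 1 : osc_spec n p (n - 2) 0
  | OscHead2 of p = 2 : osc_spec n p (n - 4) 2
  | OscHead3 of p = 3 : osc_spec n p n 1
  | OscOdd of 4 <= p < n - 4 & odd p : osc_spec n p (n + 2 - p) (p - 2)
  | OscEven of 4 <= p < n - 4 & ~~ odd p : osc_spec n p (n - 2 - p) p
  | OscTail0 of p = n - 4 : osc_spec n p 3 (n - 4)
  | OscTail1 of p = n - 3 : osc_spec n p 2 (n - 4)
  | OscTail2 of p = n - 2 : osc_spec n p 1 (n - 4)
  | OscTail3 of p = n - 1 : osc_spec n p 5 (n - 5).

Lemma oscP n p : 8 <= n -> p < n -> osc_spec n p (osc n p) (level n p).
Proof.
move=> n_ge8 p_lt_n; rewrite /osc /level.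
case: ltnP => [|p_ge4].
  by case: p {p_lt_n} => [|[|[|[|]]]] //= _; constructor.
case: ltnP => [p_mid|p_tail].
  by case: (boolP (odd p)) => p_odd; constructor; rewrite ?p_ge4.
case: eqP => [p_last|p_nlast].
  by rewrite p_last (_ : n - 1 - (n - 4) = 3) /=; [constructor|lia].
case E: (p - (n - 4)) => [|[|[|[|k]]]] /=;
  [apply: OscTail0 | apply: OscTail1 | apply: OscTail2 | | ]; lia.
Qed.

Definition linked (f : nat -> nat) (x y : nat) : bool :=
  ((x < y) && (f x < f y)) || ((y < x) && (f y < f x)).

Definition chain (v : nat) : nat := if odd v then v.+2 else v.

Section Oscillation.
Variable n : nat.
Hypothesis n_ge8 : 8 <= n.

Lemma osc_shift p : 4 <= p -> osc n.+2 p.+2 = osc n p.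
Proof.
move=> p_ge4; have [p2_nlt4 p_nlt4] : (p.+2 < 4 = false) /\ (p < 4 = false) by lia.
rewrite /osc p2_nlt4 p_nlt4 !oddS negbK.
have -> : (p.+2 < n.+2 - 4) = (p < n - 4) by lia.
have -> : p.+2 - (n.+2 - 4) = p - (n - 4) by lia.
by case: ifP => // _; case: ifP => _; lia.
Qed.

Lemma osc_range p : p < n -> 0 < osc n p <= n.
Proof. by move=> pn; case: (oscP n_ge8 pn) => *; lia. Qed.

Lemma step_osc : step (mkseq (osc n) n) = mkseq (osc n.+2) n.+2.
Proof.
have n_split : n = 4 + (n - 4) by lia.
set rest := mkseq (fun i => osc n (4 + i)) (n - 4).
have -> : mkseq (osc n) n = [:: n - 1; n - 2; n - 4; n] ++ rest.
  by rewrite {2}n_split mkseqD.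
have rest_le : all (leq^~ n) rest.
  apply/allP => x /mapP [i]; rewrite mem_iota => /andP [_ i_lt] ->.
  have i4_lt : 4 + i < n by lia.
  by case/andP: (osc_range i4_lt).
rewrite /step.
have -> : foldr maxn 0 ([:: n - 1; n - 2; n - 4; n] ++ rest) = n.
  by rewrite foldr_cat /=; move: (foldr_maxn_le rest_le); lia.
have -> : index n ([:: n - 1; n - 2; n - 4; n] ++ rest) = 3.
  by rewrite /= eqxx /= !ifN_eq //; lia.
rewrite take_size_cat // drop_size_cat //= {2}(_ : n.+2 = 6 + (n - 4)); last by lia.
rewrite mkseqD -[LHS]/([:: _; _; _; _; _; _] ++ rest); congr (_ ++ _).
  have [osc4 osc5] : osc n.+2 4 = n - 4 /\ osc n.+2 5 = n - 1.
    by rewrite /osc !ifT ?oddS //=; lia.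
  rewrite /mkseq /= osc4 osc5; congr [:: _; _; _; _; _; _]; rewrite /osc /=; lia.
by apply: eq_mkseq => i; rewrite -osc_shift // addSn.
Qed.

Hypothesis n_even : ~~ odd n.

Lemma osc_inj x y : x < n -> y < n -> osc n x = osc n y -> x = y.
Proof.
by move=> xn yn; case: (oscP n_ge8 yn); case: (oscP n_ge8 xn) => *; lia.
Qed.

Lemma osc_perm : perm_eq (mkseq (osc n) n) (iota 1 n).
Proof.
have osc_uniq : uniq (mkseq (osc n) n) by apply/mkseq_uniqP => x y; apply: osc_inj.
have osc_sub : {subset mkseq (osc n) n <= iota 1 n}.
  move=> x /mapP [p]; rewrite mem_iota => /andP [_ pn] ->.
  by rewrite mem_iota add1n ltnS osc_range.
have size_le : size (iota 1 n) <= size (mkseq (osc n) n) by rewrite size_iota size_mkseq.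
have [_ osc_iota] := uniq_min_size osc_uniq osc_sub size_le.
exact: uniq_perm osc_uniq (iota_uniq 1 n) osc_iota.
Qed.

Lemma level_linked x y : x < n -> y < n -> linked (osc n) x y ->
  level n y <= (level n x).+1.
Proof.
move=> xn yn; rewrite /linked.
by case: (oscP n_ge8 yn); case: (oscP n_ge8 xn) => *; lia.
Qed.

Lemma osc_smaller_left p q : p < q -> q < n -> osc n p < osc n q ->
  q != 3 -> q != n.-1 ->
  [|| p == q.-1, (p == q - 2) && (q == n - 2) | (p == q - 3) && (q != n - 2)].
Proof.
move=> pq qn; have pn := ltn_trans pq qn.
by case: (oscP n_ge8 qn); case: (oscP n_ge8 pn) => *; lia.
Qed.

Lemma three_smaller_left p1 p2 p3 q : p1 < p2 -> p2 < p3 -> p3 < q -> q < n ->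
  osc n p1 < osc n q -> osc n p2 < osc n q -> osc n p3 < osc n q ->
  (q == 3) || (q == n.-1).
Proof.
move=> p12 p23 p3q qn lt1 lt2 lt3.
have := osc_smaller_left (ltn_trans p12 (ltn_trans p23 p3q)) qn lt1.
have := osc_smaller_left (ltn_trans p23 p3q) qn lt2.
have := osc_smaller_left p3q qn lt3.
lia.
Qed.

Lemma three_smaller_left_ends q p : (q == 3) || (q == n.-1) -> q - 3 <= p < q ->
  osc n p < osc n q.
Proof.
move=> q_end /andP [qp pq]; have qn : q < n by lia.
by case: (oscP n_ge8 qn); case: (oscP n_ge8 (ltn_trans pq qn)) => *; lia.
Qed.

Lemma linked_chain v : 0 < v -> v < n - 6 -> linked (osc n) (chain v) (chain v.+1).
Proof.
move=> v_gt0 v_lt; have [v1n v2n v3n] : [/\ v.+1 < n, v.+2 < n & v.+3 < n] by split; lia.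
rewrite /linked /chain oddS; case: (boolP (odd v)) => v_odd /=.
  by case: (oscP n_ge8 v1n); case: (oscP n_ge8 v2n) => *; lia.
by case: (oscP n_ge8 (ltnW v1n)); case: (oscP n_ge8 v3n) => *; lia.
Qed.

Lemma linked_chain_last : linked (osc n) (chain (n - 6)) n.-1.
Proof.
have [n6 n1] : n - 6 < n /\ n.-1 < n by lia.
rewrite /linked /chain (_ : odd (n - 6) = false); last by lia.
by case: (oscP n_ge8 n6); case: (oscP n_ge8 n1) => *; lia.
Qed.

Lemma level_last : level n n.-1 = n - 5.
Proof.
have n1 : n.-1 < n by lia.
by case: (oscP n_ge8 n1) => *; lia.
Qed.

End Oscillation.

Lemma a_osc i : 0 < i -> a i = mkseq (osc (2 * i + 12)) (2 * i + 12).
Proof.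
elim: i => [//|[_ _|i IH _]]; first by [].
have -> : a i.+2 = step (a i.+1) by [].
by rewrite IH // step_osc; [congr (mkseq (osc _) _) |]; lia.
Qed.

Lemma perm_contained_size p q : perm_contained p q -> size p <= size q.
Proof. by case=> m [m_size [<- _]]; rewrite size_mask // -m_size count_size. Qed.

Lemma perm_contained_embedding p q : perm_contained p q ->
  exists e : nat -> nat,
    [/\ forall x, x < size p -> e x < size q,
        forall x y, x < y -> y < size p -> e x < e y &
        forall x y, x < size p -> y < size p ->
          (nth 0 q (e x) < nth 0 q (e y)) = (nth 0 p x < nth 0 p y)].
Proof.
case=> m [m_size [sub_size sub_order]].
set pos := mask m (iota 0 (size q)).
have q_pos : mask m q = map (nth 0 q) pos.
  by rewrite /pos map_mask -/(mkseq _ _) mkseq_nth.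
have pos_size : size pos = size p by rewrite -sub_size q_pos size_map.
have pos_sorted : sorted ltn pos.
  exact: sorted_mask ltn_trans _ _ (iota_ltn_sorted 0 (size q)).
exists (nth 0 pos); split.
- move=> x xp; have : nth 0 pos x \in iota 0 (size q).
    by apply: (mem_mask (m := m)); rewrite mem_nth // pos_size.
  by rewrite mem_iota.
- move=> x y xy yp; apply: (sorted_ltn_nth ltn_trans 0 pos_sorted) => //.
    by rewrite inE pos_size (ltn_trans xy yp).
  by rewrite inE pos_size.
- by move=> x y xp yp; rewrite -sub_order // q_pos !(nth_map 0) // pos_size.
Qed.

Section Embedding.
Variables (N M : nat) (e : nat -> nat).
Hypotheses (N_ge8 : 8 <= N) (N_even : ~~ odd N) (M_even : ~~ odd M) (N_le_M : N <= M).
Hypothesis e_lt : forall x, x < N -> e x < M.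
Hypothesis e_incr : forall x y, x < y -> y < N -> e x < e y.
Hypothesis e_osc : forall x y, x < N -> y < N ->
  (osc M (e x) < osc M (e y)) = (osc N x < osc N y).

Let M_ge8 : 8 <= M := leq_trans N_ge8 N_le_M.

Lemma embedding_linked x y : x < N -> y < N ->
  linked (osc N) x y -> linked (osc M) (e x) (e y).
Proof.
move=> xN yN; rewrite /linked !e_osc //.
by case/orP => /andP [lt_xy ->]; apply/orP; [left | right]; rewrite andbT e_incr.
Qed.

Lemma embedding_ends : e 3 = 3 /\ e N.-1 = M.-1.
Proof.
have end_image q : (q == 3) || (q == N.-1) -> (e q == 3) || (e q == M.-1).
  move=> q_end; have qN : q < N by lia.
  have smaller k : k < 3 -> osc M (e (q - 3 + k)) < osc M (e q).
    by move=> k3; rewrite e_osc ?(three_smaller_left_ends N_ge8 N_even q_end) //; lia.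
  apply: (three_smaller_left M_ge8 M_even _ _ _ (e_lt qN)
    (smaller 0 _) (smaller 1 _) (smaller 2 _)) => //; apply: e_incr; lia.
have := end_image 3 isT.
have : (e N.-1 == 3) || (e N.-1 == M.-1) by apply: end_image; rewrite eqxx orbT.
have : e 3 < e N.-1 by apply: e_incr; lia.
have : e N.-1 < M by apply: e_lt; lia.
lia.
Qed.

Lemma level_chain v : 0 < v -> v <= N - 6 -> level M (e (chain v)) <= v.
Proof.
elim: v => // v IH _ v_lt.
have [-> | v_gt0] := posnP v; first by rewrite /chain /= (proj1 embedding_ends).
have [cv_lt cv1_lt] : chain v < N /\ chain v.+1 < N.
  by rewrite /chain oddS; case: (odd v) => /=; lia.
have := level_linked M_ge8 M_even (e_lt cv_lt) (e_lt cv1_lt)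
  (embedding_linked cv_lt cv1_lt (linked_chain N_ge8 N_even v_gt0 v_lt)).
have := IH v_gt0 (ltnW v_lt); lia.
Qed.

Lemma embedding_le : M <= N.
Proof.
have [c_lt last_lt] : chain (N - 6) < N /\ N.-1 < N by rewrite /chain; case: ifP => _; lia.
have := level_linked M_ge8 M_even (e_lt c_lt) (e_lt last_lt)
  (embedding_linked c_lt last_lt (linked_chain_last N_ge8 N_even)).
have N6_gt0 : 0 < N - 6 by lia.
have := level_chain N6_gt0 (leqnn _).
rewrite (proj2 embedding_ends) level_last //; lia.
Qed.

End Embedding.

Lemma osc_contained N M : 8 <= N -> ~~ odd N -> ~~ odd M ->
  perm_contained (mkseq (osc N) N) (mkseq (osc M) M) -> N = M.
Proof.
move=> N_ge8 N_even M_even contained.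
have := perm_contained_size contained; rewrite !size_mkseq => N_le_M.
have [e []] := perm_contained_embedding contained; rewrite !size_mkseq => e_lt e_incr e_nth.
have e_osc x y : x < N -> y < N -> (osc M (e x) < osc M (e y)) = (osc N x < osc N y).
  by move=> xN yN; have := e_nth x y xN yN; rewrite !nth_mkseq ?e_lt.
by apply/eqP; rewrite eqn_leq N_le_M (embedding_le N_ge8 N_even M_even N_le_M e_lt e_incr e_osc).
Qed.

Theorem mainTheorem1 :
  (forall i, 1 <= i -> perm_eq (a i) (iota 1 (2 * i + 12))) /\
  (forall i j, 1 <= i -> 1 <= j -> i <> j -> incomparable (a i) (a j)) /\
  (* consequently {a_i : i >= 1} is an infinite antichain *)
  (forall i j, 1 <= i -> 1 <= j -> a i = a j -> i = j).
Proof.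
have a_ge8 i : 8 <= 2 * i + 12 by lia.
have a_even i : ~~ odd (2 * i + 12) by rewrite oddD oddM.
split; [|split].
- by move=> i i_gt0; rewrite a_osc // osc_perm.
- move=> i j i_gt0 j_gt0 i_ne_j; rewrite !a_osc //.
  by split=> /osc_contained => /(_ (a_ge8 _) (a_even _) (a_even _)); lia.
- move=> i j i_gt0 j_gt0; rewrite !a_osc // => /(congr1 size).
  by rewrite !size_mkseq; lia.
Qed.
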